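(* Let $1/n\ll\theta,\gamma\ll\tau\leq 1$ and $k\in\mathbb{N}$. Let $G$ be a digraph on $n$ vertices, $\mathcal{Q}$ a path system in $G$, and $\mathcal{P}_k=\{V_{ij}:i,j\in[k]\}$ a $k^2$-partition of $V(G)$. Let $G'$ with partition $\mathcal{P}'_k$ be obtained by contracting $\mathcal{Q}$ in $G$ with respect to $\mathcal{P}_k$. Then $|\mathcal{B}_k(\mathcal{P}'_k,G')|\leq|\mathcal{B}_k(\mathcal{P}_k,G)|$. Moreover, if $\mathcal{P}_k$ is a $(k^2,\tau,\gamma)$-partition of $G$ and $e(\mathcal{Q})\leq\theta n$, then $\mathcal{P}'_k$ is a $(k^2,\tau/2,2\gamma)$-partition of $G'$.
   Context: Hierarchy convention: $x\ll y$ means $x\leq f(y)$ for some implicitly given non-decreasing function; the statement asserts such functions exist, constants chosen from right to left. A path system in $G$ is a set of vertex-disjoint directed paths in $G$; $e(\mathcal{Q})$ is its total number of edges and $V(\mathcal{Q})$ the set of vertices on its paths. A $k^2$-partition of $V(G)$ is a family $\{V_{ij}:i,j\in[k]\}$ of pairwise disjoint (possibly empty) sets with union $V(G)$; $V_{i*}=\bigcup_jV_{ij}$, $V_{*j}=\bigcup_iV_{ij}$; $E(A,B)$ is the set of edges $ab$ with $a\in A,b\in B$; bad edges $\mathcal{B}_k(\mathcal{P}_k,G)=\bigcup_{i\neq j}E(V_{i*},V_{*j})$. A $(k^2,\tau,\gamma)$-partition of an $N$-vertex digraph is a $k^2$-partition with at most $\gamma N^2$ bad edges and $|V_{i*}|,|V_{*j}|\geq\tau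 N$ for all $i,j$. Contraction: for each path $Q\in\mathcal{Q}$, going from $u$ to $v$, create a new vertex $x_Q$. The vertex set of $G'$ is $(V(G)\setminus V(\mathcal{Q}))\cup\{x_Q:Q\in\mathcal{Q}\}$. For $y\in V(G')$ put $y^-=y^+=y$ if $y\in V(G)$, and $x_Q^-=u$, $x_Q^+=v$ if $Q$ goes from $u$ to $v$; then $yz$ is an edge of $G'$ iff $y^+z^-\in E(G)$ (so $x_Q$ inherits the inneighbours of $u$ and the outneighbours of $v$). The resulting partition is $\mathcal{P}'_k=\{V'_{ij}\}$ where $V'_{ij}$ consists of $V_{ij}\setminus V(\mathcal{Q})$ together with all $x_Q$ such that $Q$ goes from $u$ to $v$ with $u\in V_{*j}$ and $v\in V_{i*}$. *)

From mathcomp Require Import all_boot all_order all_algebra.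
Set Implicit Arguments. Unset Strict Implicit. Unset Printing Implicit Defensive.
Import Order.TTheory GRing.Theory Num.Theory.
Local Open Scope ring_scope.

(* A digraph is an edge relation G : rel T on a finite vertex type T;
   V(G) is the whole of T. *)

Section Partitions.
Variable T : finType.

Definition is_k2partition k (P : 'I_k -> 'I_k -> {set T}) : Prop :=
  (forall i j i' j', (i, j) != (i', j') -> [disjoint P i j & P i' j']) /\
  (forall x : T, exists i j, x \in P i j).

Definition rowset k (P : 'I_k -> 'I_k -> {set T}) (i : 'I_k) : {set T} :=
  \bigcup_(j < k) P i j.
Definition colset k (P : 'I_k -> 'I_k -> {set T}) (j : 'I_k) : {set T} :=
  \bigcup_(i < k) P i j.

Definition bad_edges (G : rel T) k (P : 'I_k -> 'I_k -> {set T}) : {set T * T} :=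
  [set e : T * T | G e.1 e.2 &&
     [exists i : 'I_k, exists j : 'I_k,
        [&& i != j, e.1 \in rowset P i & e.2 \in colset P j]]].

Definition tg_partition (R : realFieldType) (G : rel T) k
    (P : 'I_k -> 'I_k -> {set T}) (tau gamma : R) : Prop :=
  is_k2partition P /\
  (#|bad_edges G P|%:R <= gamma * (#|T|%:R) ^+ 2) /\
  (forall i, tau * #|T|%:R <= #|rowset P i|%:R) /\
  (forall j, tau * #|T|%:R <= #|colset P j|%:R).

(* Path systems: a path is a pair (x, p) standing for the vertex
   sequence x :: p; Q is a finite list of such paths. *)
Definition pverts (Q : seq (T * seq T)) : seq T :=
  flatten [seq q.1 :: q.2 | q <- Q].

Definition path_system (G : rel T) (Q : seq (T * seq T)) : Prop :=
  uniq (pverts Q) /\ all (fun q => path G q.1 q.2) Q.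

Definition VQ (Q : seq (T * seq T)) : {set T} := [set x | x \in pverts Q].

Definition eQ (Q : seq (T * seq T)) : nat := sumn [seq size q.2 | q <- Q].

Definition pstart (q : T * seq T) : T := q.1.
Definition pend (q : T * seq T) : T := last q.1 q.2.

(* Vertex type of the contracted digraph: vertices of G outside V(Q)
   (inl) together with one new vertex x_Q per path (inr). *)
Definition cvalid (Q : seq (T * seq T)) (y : T + 'I_(size Q)) : bool :=
  match y with inl t => t \notin VQ Q | inr _ => true end.

Definition CV (Q : seq (T * seq T)) := {y : T + 'I_(size Q) | @cvalid Q y}.

Definition cminus (Q : seq (T * seq T)) (y : CV Q) : T :=
  match val y with inl t => t | inr i => pstart (tnth (in_tuple Q) i) end.
Definition cplus (Q : seq (T * seq T)) (y : CV Q) : T :=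
  match val y with inl t => t | inr i => pend (tnth (in_tuple Q) i) end.

Definition contract_graph (G : rel T) (Q : seq (T * seq T)) : rel (CV Q) :=
  fun y z => G (cplus y) (cminus z).

Definition contract_part (Q : seq (T * seq T)) k (P : 'I_k -> 'I_k -> {set T})
    : 'I_k -> 'I_k -> {set CV Q} :=
  fun i j => [set y : CV Q |
    match val y with
    | inl t => t \in P i j
    | inr _ => (cminus y \in colset P j) && (cplus y \in rowset P i)
    end].

End Partitions.

Arguments contract_graph {T} G Q _ _.
Arguments contract_part {T} Q {k} P _ _.

From mathcomp Require Import all_boot all_order all_algebra.
From mathcomp Require Import lra.
Import Order.TTheory GRing.Theory Num.Theory.

Set Implicit Arguments.
Unset Strict Implicit.
Unset Printing Implicit Defensive.

(* Contraction replaces each path q by a single vertex x_q carrying the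
   in-edges of its start and the out-edges of its end.  The maps y |-> y^+
   and y |-> y^- are then injective, so bad edges of G' inject into bad
   edges of G, and every vertex of G except the e(Q) non-final (resp.
   non-initial) path vertices is some y^+ (resp. y^-).  Hence the vertex
   set and every V_{i*}, V_{*j} shrink by at most e(Q) <= theta n, which
   costs only a constant factor in tau and gamma. *)

Section PathSystems.
Variable T : finType.
Implicit Types (Q : seq (T * seq T)) (f : T * seq T -> T).

Definition vertex_selector f := forall q, f q \in q.1 :: q.2.

Lemma pstart_selector : vertex_selector (@pstart T).
Proof. by move=> q; apply: mem_head. Qed.

Lemma pend_selector : vertex_selector (@pend T).
Proof. by move=> q; apply: mem_last. Qed.

Lemma mem_pverts Q q x : q \in Q -> x \in q.1 :: q.2 -> x \in pverts Q.
Proof. by move=> qQ xq; apply/flattenP; exists (q.1 :: q.2); rewrite ?map_f. Qed.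

Lemma pverts_cons q Q : pverts (q :: Q) = (q.1 :: q.2) ++ pverts Q.
Proof. by []. Qed.

Lemma size_pverts Q : size (pverts Q) = eQ Q + size Q.
Proof. by elim: Q => // q Q IH; rewrite pverts_cons size_cat IH /= addnS addnA. Qed.

Lemma uniq_map_selector Q f :
  vertex_selector f -> uniq (pverts Q) -> uniq (map f Q).
Proof.
move=> fsel; elim: Q => // q Q IH.
rewrite pverts_cons cat_uniq => /and3P[_ disj uQ].
rewrite /= IH // andbT; apply/mapP => -[q' q'Q fq].
by move/hasPn: disj => /(_ _ (mem_pverts q'Q (fsel q'))); rewrite -fq fsel.
Qed.

Lemma card_VQ_interior Q f : vertex_selector f -> uniq (pverts Q) ->
  #|VQ Q :\: [set x in map f Q]| = eQ Q.
Proof.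
move=> fsel uQ.
have ends_sub : [set x in map f Q] \subset VQ Q.
  by apply/subsetP => x; rewrite !inE => /mapP[q qQ ->]; apply: mem_pverts (fsel q).
rewrite cardsD (setIidPr ends_sub) !cardsE.
by rewrite !(card_uniqP _) ?uniq_map_selector // size_map size_pverts addnK.
Qed.

End PathSystems.

Section Contraction.
Variables (T : finType) (Q : seq (T * seq T)).
Hypothesis Quniq : uniq (pverts Q).

Definition contract_vertex (f : T * seq T -> T) (y : CV Q) : T :=
  match val y with inl t => t | inr i => f (tnth (in_tuple Q) i) end.

Section Selector.
Variable f : T * seq T -> T.
Hypothesis fsel : vertex_selector f.

Lemma mem_VQ_selector i : f (tnth (in_tuple Q) i) \in VQ Q.
Proof. by rewrite inE (mem_pverts (mem_tnth _ _) (fsel _)). Qed.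

Lemma contract_vertex_inj : injective (contract_vertex f).
Proof.
rewrite /contract_vertex => -[[t|i] Ht] [[t'|i'] Ht'] /=.
- by move=> tt'; apply: val_inj; rewrite /= tt'.
- by move=> tE; exfalso; have := Ht; rewrite /= tE mem_VQ_selector.
- by move=> tE; exfalso; have := Ht'; rewrite /= -tE mem_VQ_selector.
- move=> fii'; apply: val_inj; congr inr.
  apply: (tuple_uniqP (map_tuple f (in_tuple Q)) _); first exact: uniq_map_selector.
  by rewrite !tnth_map.
Qed.

Lemma contract_vertex_onto t : t \notin VQ Q :\: [set x in map f Q] ->
  exists y, contract_vertex f y = t.
Proof.
rewrite in_setD negb_and negbK => /orP[| tV]; last by exists (exist _ (inl t) tV).
rewrite inE => /mapP[q qQ ->]; have iQ : index q Q < size Q by rewrite index_mem.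
exists (exist _ (inr (Ordinal iQ)) isT).
by rewrite /contract_vertex /= (tnth_nth q) nth_index.
Qed.

Lemma leq_card_preimset_contract (A : {set T}) :
  #|A| <= #|contract_vertex f @^-1: A| + eQ Q.
Proof.
pose g := contract_vertex f.
have A_sub : A \subset g @: (g @^-1: A) :|: (VQ Q :\: [set x in map f Q]).
  apply/subsetP => t tA; rewrite in_setU.
  case: (boolP (t \in VQ Q :\: [set x in map f Q])) => [_ | /contract_vertex_onto[y gy]].
    by rewrite orbT.
  by rewrite orbF; apply/imsetP; exists y; rewrite ?inE /g gy.
apply: leq_trans (subset_leq_card A_sub) (leq_trans (leq_card_setU _ _) _).
by rewrite card_VQ_interior // leq_add2r leq_imset_card.
Qed.

End Selector.

Lemma cplus_inj : injective (@cplus T Q).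
Proof. exact: contract_vertex_inj (@pend_selector T). Qed.

Lemma cminus_inj : injective (@cminus T Q).
Proof. exact: contract_vertex_inj (@pstart_selector T). Qed.

Lemma card_contract_le : #|{: CV Q}| <= #|T|.
Proof. exact: leq_card cplus_inj. Qed.

Lemma card_le_contract : #|T| <= #|{: CV Q}| + eQ Q.
Proof.
have := leq_card_preimset_contract (@pend_selector T) setT.
by rewrite preimsetT !cardsT.
Qed.

End Contraction.

Section K2Partitions.
Variables (T : finType) (k : nat) (P : 'I_k -> 'I_k -> {set T}).

Lemma mem_cell_rowset x i j : x \in P i j -> x \in rowset P i.
Proof. by move=> xP; apply/bigcupP; exists j. Qed.

Lemma mem_cell_colset x i j : x \in P i j -> x \in colset P j.
Proof. by move=> xP; apply/bigcupP; exists i. Qed.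

Hypothesis Pk : is_k2partition P.

Lemma k2partition_cell_eq x i j i' j' :
  x \in P i j -> x \in P i' j' -> (i, j) = (i', j').
Proof.
move=> xij xij'; apply/eqP; apply: contraTT xij' => /(proj1 Pk) disj.
by rewrite (disjointFr disj xij).
Qed.

Lemma k2partition_rowset_eq x i i' :
  x \in rowset P i -> x \in rowset P i' -> i = i'.
Proof.
by move=> /bigcupP[j _ xij] /bigcupP[j' _ /(k2partition_cell_eq xij)] [].
Qed.

Lemma k2partition_colset_eq x j j' :
  x \in colset P j -> x \in colset P j' -> j = j'.
Proof.
by move=> /bigcupP[i _ xij] /bigcupP[i' _ /(k2partition_cell_eq xij)] [].
Qed.

Lemma k2partition_rowset_cover x : exists i, x \in rowset P i.
Proof. by have [i [j /mem_cell_rowset xi]] := proj2 Pk x; exists i. Qed.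

Lemma k2partition_colset_cover x : exists j, x \in colset P j.
Proof. by have [i [j /mem_cell_colset xj]] := proj2 Pk x; exists j. Qed.

End K2Partitions.

Section ContractPartition.
Variables (T : finType) (Q : seq (T * seq T)) (k : nat).
Variable P : 'I_k -> 'I_k -> {set T}.
Hypotheses (Quniq : uniq (pverts Q)) (Pk : is_k2partition P).

Local Notation P' := (contract_part Q P).

Lemma contract_rowset i : rowset P' i = @cplus T Q @^-1: rowset P i.
Proof.
apply/setP => -[[t | q] Ht]; rewrite inE /cplus /=.
  by apply/bigcupP/bigcupP => -[j _ tP]; exists j; rewrite // inE in tP *.
apply/bigcupP/idP => [[j _] | qi]; first by rewrite inE => /andP[].
have [j qj] := k2partition_colset_cover Pk (cminus (exist _ (inr q) Ht)).
by exists j; rewrite // inE qj.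
Qed.

Lemma contract_colset j : colset P' j = @cminus T Q @^-1: colset P j.
Proof.
apply/setP => -[[t | q] Ht]; rewrite inE /cminus /=.
  by apply/bigcupP/bigcupP => -[i _ tP]; exists i; rewrite // inE in tP *.
apply/bigcupP/idP => [[i _] | qj]; first by rewrite inE => /andP[].
have [i qi] := k2partition_rowset_cover Pk (cplus (exist _ (inr q) Ht)).
by exists i; rewrite // inE qi andbT.
Qed.

Lemma contract_part_k2partition : is_k2partition P'.
Proof.
split=> [i j i' j' ij_neq | [[t | q] Ht]].
- rewrite -setI_eq0; apply/eqP/setP => y; rewrite in_setI in_set0.
  apply/negP => /andP[yij yij'].
  have row_y i1 j1 : y \in P' i1 j1 -> cplus y \in rowset P i1.
    by move/mem_cell_rowset; rewrite contract_rowset inE.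
  have col_y i1 j1 : y \in P' i1 j1 -> cminus y \in colset P j1.
    by move/mem_cell_colset; rewrite contract_colset inE.
  move: ij_neq; rewrite (k2partition_rowset_eq Pk (row_y _ _ yij) (row_y _ _ yij')).
  by rewrite (k2partition_colset_eq Pk (col_y _ _ yij) (col_y _ _ yij')) eqxx.
- by have [i [j tij]] := proj2 Pk t; exists i, j; rewrite inE.
- set y := exist _ (inr q) Ht.
  have [i yi] := k2partition_rowset_cover Pk (cplus y).
  have [j yj] := k2partition_colset_cover Pk (cminus y).
  by exists i, j; rewrite inE /= yi yj.
Qed.

Lemma card_rowset_contract i : #|rowset P i| <= #|rowset P' i| + eQ Q.
Proof.
rewrite contract_rowset.
exact: (leq_card_preimset_contract Quniq (@pend_selector T)).
Qed.

Lemma card_colset_contract j : #|colset P j| <= #|colset P' j| + eQ Q.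
Proof.
rewrite contract_colset.
exact: (leq_card_preimset_contract Quniq (@pstart_selector T)).
Qed.

Lemma card_bad_edges_contract (G : rel T) :
  #|bad_edges (contract_graph G Q) P'| <= #|bad_edges G P|.
Proof.
pose h (e : CV Q * CV Q) := (cplus e.1, cminus e.2).
have h_inj : injective h.
  by move=> [y z] [y' z'] [/(cplus_inj Quniq) -> /(cminus_inj Quniq) ->].
rewrite -(card_imset _ h_inj); apply/subset_leq_card/subsetP => _ /imsetP[[y z] + ->].
rewrite !inE => /andP[Gyz /existsP[i /existsP[j /and3P[ij yi zj]]]].
rewrite contract_rowset inE in yi; rewrite contract_colset inE in zj.
by apply/andP; split=> //; apply/existsP; exists i; apply/existsP; exists j; apply/and3P.
Qed.

End ContractPartition.

Section Perturbation.
Local Open Scope ring_scope.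
Variables (R : realFieldType) (T T' : finType) (k : nat).
Variables (G : rel T) (G' : rel T') (P : 'I_k -> 'I_k -> {set T}).
Variables (P' : 'I_k -> 'I_k -> {set T'}) (e : nat) (tau gamma : R).

Lemma tg_partition_perturb :
  0 <= tau <= 1 -> 0 <= gamma -> is_k2partition P' ->
  (#|bad_edges G' P'| <= #|bad_edges G P|)%N ->
  (#|T'| <= #|T|)%N -> (#|T| <= #|T'| + e)%N ->
  (forall i, #|rowset P i| <= #|rowset P' i| + e)%N ->
  (forall j, #|colset P j| <= #|colset P' j| + e)%N ->
  e%:R <= tau / 4 * #|T|%:R ->
  tg_partition G P tau gamma -> tg_partition G' P' (tau / 2) (2 * gamma).
Proof.
move=> /andP[tau_ge0 tau_le1] gamma_ge0 P'k bad_le.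
rewrite -(ler_nat R) => T'_le; rewrite -(ler_nat R) natrD => T_le row_le col_le e_le.
move=> [_ [bad_bound [row_bound col_bound]]].
set n := (#|T|%:R : R) in T'_le T_le e_le bad_bound row_bound col_bound *.
set n' := (#|T'|%:R : R) in T'_le T_le *.
have n_ge0 : 0 <= n by [].
have shrink (r r' : nat) : tau * n <= r%:R -> (r <= r' + e)%N -> tau / 2 * n' <= r'%:R.
  rewrite -(ler_nat R) natrD => r_ge r_le.
  have : tau / 2 * n' <= tau / 2 * n by apply: ler_wpM2l => //; lra.
  lra.
split=> //; split; last first.
  by split=> [i | j]; [apply: shrink (row_le i) | apply: shrink (col_le j)].
rewrite -(ler_nat R) in bad_le; apply: le_trans bad_le (le_trans bad_bound _).
(* e <= n / 4 gives n <= 4 n' / 3, and (4 / 3)^2 <= 2. *)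
have n_sq : n ^+ 2 <= 2 * n' ^+ 2 by nra.
nra.
Qed.

End Perturbation.

Local Open Scope ring_scope.

Theorem proposition4p9 (R : realFieldType) :
  forall tau : R, 0 < tau <= 1 ->
  exists delta : R, 0 < delta /\
  forall theta gamma : R, 0 < theta <= delta -> 0 < gamma <= delta ->
  exists n0 : nat,
  forall (T : finType) (k : nat) (G : rel T) (Q : seq (T * seq T))
         (P : 'I_k -> 'I_k -> {set T}),
    (n0 <= #|T|)%N ->
    irreflexive G ->
    path_system G Q ->
    is_k2partition P ->
    (#|bad_edges (contract_graph G Q) (contract_part Q P)| <= #|bad_edges G P|)%N /\
    (tg_partition G P tau gamma ->
     (eQ Q)%:R <= theta * #|T|%:R ->
     tg_partition (contract_graph G Q) (contract_part Q P) (tau / 2) (2 * gamma)).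
Proof.
move=> tau /andP[tau_gt0 tau_le1]; exists (tau / 4); split; first lra.
move=> theta gamma /andP[_ theta_le] /andP[gamma_gt0 _]; exists 0%N.
move=> T k G Q P _ _ [Quniq _] Pk.
have bad_le := card_bad_edges_contract Quniq Pk G.
split=> // Ptg eQ_le; apply: (tg_partition_perturb (e := eQ Q)) Ptg => //.
- by rewrite (ltW tau_gt0) tau_le1.
- exact: ltW.
- exact: contract_part_k2partition.
- exact: card_contract_le.
- exact: card_le_contract.
- exact: card_rowset_contract.
- exact: card_colset_contract.
- by apply: le_trans eQ_le _; apply: ler_wpM2r.
Qed.
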